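(* Let $L\ge 6$ be even and let $0\le\ell_1,\ell_2\le L$ be integers. The perimeter of the rhombus $\mathcal{R}_{\ell_1,\ell_2}$ (with any reference site) on the $L\times L$ toric grid graph satisfies $$P(\mathcal{R}_{\ell_1,\ell_2})=4\times\begin{cases}\ell_1+\ell_2+1 & \text{if } \min\{\ell_1,\ell_2\}<L/2 \text{ and } \max\{\ell_1,\ell_2\}<L,\\ 2L-(\ell_1+\ell_2+1) & \text{if } \min\{\ell_1,\ell_2\}\ge L/2 \text{ and } \max\{\ell_1,\ell_2\}<L,\\ L & \text{if } \min\{\ell_1,\ell_2\}<L/2 \text{ and } \max\{\ell_1,\ell_2\}=L,\\ 0 & \text{if } \min\{\ell_1,\ell_2\}\ge L/2 \text{ and } \max\{\ell_1,\ell_2\}=L.\end{cases}$$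
   Context: $L\ge 6$ is even and $\Lambda=(V,E)$ is the $L\times L$ toric grid graph: $V=\{0,\dots,L-1\}^2$, two sites adjacent iff they differ by $\pm1$ mod $L$ in exactly one coordinate; coordinates are taken mod $L$. Sites are even/odd according to the parity of the coordinate sum; $V_{\mathrm{e}},V_{\mathrm{o}}$ denote even/odd sites. For $S\subseteq V$, $\partial^+S$ is the set of sites outside $S$ adjacent to $S$, and $\nabla S$ is the set of edges joining a site of $S$ to a site of $\partial^+ S$; the perimeter of $S$ is $P(S)=|\nabla S|$. Rhombi: for $\eta=(\eta_1,\eta_2)\in V_{\mathrm{o}}$ and positive $\ell_1,\ell_2\le L$, $\mathcal{R}_{\ell_1,\ell_2}(\eta)=S\cup\partial^+S$ with $S=\{(\eta_1+k+j,\eta_2+k-j):0\le k\le\ell_1-1,\ 0\le j\le \ell_2-1\}$. Degenerate rhombi (when $\ell_1\ell_2=0$) have a reference site $\eta\in V_{\mathrm{e}}$ and are sets of even sites: $\mathcal{R}_{0,\ell_2}(\eta)=\{(\eta_1+j,\eta_2-j):0\le j\le \ell_2\}$ for $\ell_2\neq0$, $\mathcal{R}_{\ell_1,0}(\eta)=\{(\eta_1+k,\eta_2+k):0\le k\le\ell_1\}$ for $\ell_1\ne0$, and $\mathcal{R}_{0,0}(\eta)=\{\eta\}$. *)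

From mathcomp Require Import all_boot.
Set Implicit Arguments. Unset Strict Implicit. Unset Printing Implicit Defensive.

Definition site (L : nat) := ('I_L * 'I_L)%type.

Definition adj (L : nat) (x y : site L) : bool :=
  ((x.1 == y.1 :> nat) &&
     (((y.2 : nat) == (x.2 + 1) %% L) || ((x.2 : nat) == (y.2 + 1) %% L)))
  || ((x.2 == y.2 :> nat) &&
     (((y.1 : nat) == (x.1 + 1) %% L) || ((x.1 : nat) == (y.1 + 1) %% L))).

Definition is_even_site (L : nat) (x : site L) : bool := ~~ odd (x.1 + x.2).
Definition is_odd_site (L : nat) (x : site L) : bool := odd (x.1 + x.2).

Definition bdry (L : nat) (S : {set site L}) : {set site L} :=
  [set y | (y \notin S) && [exists x in S, adj x y]].

Definition perim (L : nat) (S : {set site L}) : nat :=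
  #|[set p : site L * site L | (p.1 \in S) && (p.2 \in bdry S) && adj p.1 p.2]|.

Definition rhombus_core (L l1 l2 : nat) (eta : site L) : {set site L} :=
  [set x : site L | [exists k : 'I_l1, exists j : 'I_l2,
      ((x.1 : nat) == (eta.1 + k + j) %% L) &&
      ((x.2 : nat) == (eta.2 + k + (L - j)) %% L)]].

Definition rhombus (L l1 l2 : nat) (eta : site L) : {set site L} :=
  if (0 < l1) && (0 < l2) then
    rhombus_core l1 l2 eta :|: bdry (rhombus_core l1 l2 eta)
  else if 0 < l2 then
    [set x : site L | [exists j : 'I_l2.+1,
       ((x.1 : nat) == (eta.1 + j) %% L) && ((x.2 : nat) == (eta.2 + (L - j)) %% L)]]
  else if 0 < l1 then
    [set x : site L | [exists k : 'I_l1.+1,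
       ((x.1 : nat) == (eta.1 + k) %% L) && ((x.2 : nat) == (eta.2 + k) %% L)]]
  else [set eta].

From mathcomp Require Import all_boot zify.
From Stdlib Require Import Btauto.
Set Implicit Arguments. Unset Strict Implicit. Unset Printing Implicit Defensive.

(* The torus graph is 4-regular and, L being even, bipartite for the parity of
   x1 + x2.  The core C of a rhombus, i.e. the sites eta + k(1,1) + j(1,-1) with
   k < l1 and j < l2, has a single parity, and so does its outer boundary, which
   is the core with sides l1 + 1 and l2 + 1 based at eta - (1,0).  Double counting
   the edges between C and its boundary B then gives P(C u B) = 4|B| - 4|C|, and a
   degenerate rhombus, being itself a core of one parity, has perimeter 4|C|.
   Finally (k, j) |-> eta + k(1,1) + j(1,-1) identifies exactly the parameters that
   differ by (L/2, L/2) modulo L, whence |C| = l1 l2 - 2 (l1 - L/2)^+ (l2 - L/2)^+,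
   and the stated formula is arithmetic. *)

Lemma card_set_sum (T : finType) (P : pred T) : #|[set x | P x]| = \sum_x P x.
Proof.
by rewrite -sum1_card big_mkcond; apply: eq_bigr => x _; rewrite inE; case: (P x).
Qed.

Lemma card_ord_range n c d : #|[set i : 'I_n | c <= i < d]| = minn d n - c.
Proof.
rewrite card_set_sum; elim: n => [|n IH]; first by rewrite big_ord0; lia.
by rewrite big_ord_recr /= IH; lia.
Qed.

Lemma exists_ord1 (P : pred 'I_1) : [exists k, P k] = P ord0.
Proof. by apply/existsP/idP => [[k]|]; [rewrite (ord1 k) | exists ord0]. Qed.

Section EdgeBoundary.
Variables (T : finType) (e : rel T).

Definition outer_bdry (S : {set T}) : {set T} :=
  [set y | (y \notin S) && [exists x in S, e x y]].

Definition edge_perim (S : {set T}) : nat :=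
  #|[set p : T * T | (p.1 \in S) && (p.2 \in outer_bdry S) && e p.1 p.2]|.

Definition independent (S : {set T}) := {in S &, forall x y, ~~ e x y}.

Lemma card_set_pairs (P : T -> T -> bool) :
  #|[set p : T * T | P p.1 p.2]| = \sum_x #|[set y | P x y]|.
Proof.
rewrite -sum1_card (eq_bigl (fun p : T * T => P p.1 p.2)) => [|p]; last by rewrite inE.
rewrite -(pair_big_dep xpredT P (fun _ _ => 1)) /=.
by apply: eq_bigr => x _; rewrite sum1_card; apply: eq_card => y; rewrite inE.
Qed.

Lemma edge_perimE S :
  edge_perim S = \sum_(x in S) #|[set y | (y \notin S) && e x y]|.
Proof.
rewrite /edge_perim (card_set_pairs (fun x y => (x \in S) && (y \in outer_bdry S) && e x y)).
rewrite (bigID (mem S)) /= [X in _ + X]big1 ?addn0.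
  apply: eq_bigr => x xS; apply: eq_card => y; rewrite !inE xS /=.
  case exy: (e x y); rewrite ?andbT ?andbF //; case: (y \in S) => //=.
  by apply/existsP; exists x; rewrite xS.
by move=> x /negbTE xS; apply/eqP; rewrite cards_eq0; apply/eqP/setP => y; rewrite !inE xS.
Qed.

Lemma card_set_in_sum (A : {set T}) (P : pred T) :
  #|[set y in A | P y]| = \sum_(y in A) P y.
Proof. by rewrite card_set_sum [RHS]big_mkcond; apply: eq_bigr => y _; case: (y \in A). Qed.

Lemma sum_card_adj (A B : {set T}) :
  \sum_(x in A) #|[set y in B | e x y]| = \sum_(y in B) #|[set x in A | e x y]|.
Proof.
under eq_bigr do rewrite card_set_in_sum.
under [RHS]eq_bigr do rewrite card_set_in_sum.
exact: exchange_big.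
Qed.

Variables (d : nat) (e_sym : symmetric e).
Hypothesis e_regular : forall x, #|[set y | e x y]| = d.

Lemma mem_outer_bdry S x y :
  independent S -> x \in S -> e x y -> y \in outer_bdry S.
Proof.
move=> indS xS exy; rewrite inE; apply/andP; split.
  by apply: contraTN exy => yS; exact: indS.
by apply/existsP; exists x; rewrite xS.
Qed.

Lemma edge_perim_independent S : independent S -> edge_perim S = d * #|S|.
Proof.
move=> indS; rewrite edge_perimE mulnC -sum_nat_const; apply: eq_bigr => x xS.
rewrite -(e_regular x); apply: eq_card => y; rewrite !inE.
case exy: (e x y); rewrite ?andbT ?andbF //.
by have := mem_outer_bdry indS xS exy; rewrite inE => /andP[].
Qed.

Lemma edge_perim_closure S : independent S -> independent (outer_bdry S) ->
  edge_perim (S :|: outer_bdry S) + d * #|S| = d * #|outer_bdry S|.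
Proof.
set B := outer_bdry S => indS indB.
have disjSB : [disjoint S & B] by apply/pred0P => x /=; rewrite !inE; case: (x \in S).
have out_nbrs x : x \in B ->
    #|[set y | (y \notin S :|: B) && e x y]| + #|[set y in S | e x y]| = d.
  move=> xB; rewrite -(e_regular x) -(cardsID S [set y | e x y]) addnC.
  congr (_ + _); apply: eq_card => y; rewrite !inE; first by rewrite andbC.
  case exy: (e x y); rewrite ?andbT ?andbF //.
  case yS: (y \in S) => //=; apply/negP => yB.
  by have := indB x y xB; rewrite inE yS yB exy => /(_ isT).
have S_adj_B : \sum_(x in B) #|[set y in S | e x y]| = d * #|S|.
  rewrite sum_card_adj mulnC -sum_nat_const; apply: eq_bigr => y yS.
  rewrite -(e_regular y); apply: eq_card => x; rewrite !inE e_sym.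
  case eyx: (e y x); rewrite ?andbT ?andbF //.
  by have := mem_outer_bdry indS yS eyx; rewrite inE.
rewrite edge_perimE (eq_bigl [predU S & B]) => [|x]; last by rewrite !inE.
rewrite bigU //= big1 ?add0n => [|x xS]; last first.
  apply/eqP; rewrite cards_eq0; apply/eqP/setP => y; rewrite !inE.
  case exy: (e x y); rewrite ?andbT ?andbF //; apply/negbF.
  by have := mem_outer_bdry indS xS exy; rewrite inE => ->; rewrite orbT.
rewrite -S_adj_B -big_split mulnC -sum_nat_const; exact: eq_bigr.
Qed.

End EdgeBoundary.

Section Torus.
Variable L : nat.
Hypothesis L_gt0 : 0 < L.

Lemma perimE (S : {set site L}) : perim S = edge_perim (@adj L) S.
Proof. by []. Qed.

Lemma bdryE (S : {set site L}) : bdry S = outer_bdry (@adj L) S.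
Proof. by []. Qed.

Definition torus_site (a b : nat) : site L :=
  (Ordinal (ltn_pmod a L_gt0), Ordinal (ltn_pmod b L_gt0)).

Lemma eq_torus_site (x : site L) a b :
  (x == torus_site a b) = (x.1 == a %% L :> nat) && (x.2 == b %% L :> nat).
Proof. by []. Qed.

Lemma torus_site_congr a b a' b' :
  a = a' %[mod L] -> b = b' %[mod L] -> torus_site a b = torus_site a' b'.
Proof. by move=> Ea Eb; apply/eqP; rewrite eq_torus_site /= Ea Eb !eqxx. Qed.

Lemma torus_site_shift_eq a b u v u' v' : u < L -> v < L -> u' < L -> v' < L ->
  (torus_site (a + u) (b + v) == torus_site (a + u') (b + v')) = (u == u') && (v == v').
Proof.
move=> *; rewrite eq_torus_site /= -!/(_ == _ %[mod L]) !eqn_modDl !modn_small //.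
Qed.

Definition torus_step (x : site L) (u v : nat) := torus_site (x.1 + u) (x.2 + v).

Definition torus_nbrs (x : site L) : {set site L} :=
  [set torus_step x 1 0; torus_step x (L - 1) 0; torus_step x 0 1; torus_step x 0 (L - 1)].

Lemma eq_succ_mod a b : a < L -> b < L -> (a == (b + 1) %% L) = (b == (a + (L - 1)) %% L).
Proof.
move=> aL bL; rewrite -[a in LHS](modn_small aL) -[b in RHS](modn_small bL).
by rewrite -!/(_ == _ %[mod L]) -(eqn_modDr (L - 1)) -addnA subnKC // modnDr eq_sym.
Qed.

Lemma adjE (x y : site L) : adj x y = (y \in torus_nbrs x).
Proof.
rewrite !inE !eq_torus_site /adj /= !addn0.
rewrite (modn_small (ltn_ord x.2)) (modn_small (ltn_ord x.1)).
rewrite (eq_succ_mod (ltn_ord x.2) (ltn_ord y.2)) (eq_succ_mod (ltn_ord x.1) (ltn_ord y.1)).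
rewrite [(x.1 : nat) == y.1]eq_sym [(x.2 : nat) == y.2]eq_sym.
btauto.
Qed.

Lemma adj_sym : symmetric (@adj L).
Proof.
by move=> x y; rewrite /adj [(y.1 : nat) == x.1]eq_sym [(y.2 : nat) == x.2]eq_sym; btauto.
Qed.

Lemma card_adj (x : site L) : 2 < L -> #|[set y | adj x y]| = 4.
Proof.
move=> L_gt2; rewrite (_ : [set y | adj x y] = torus_nbrs x); last first.
  by apply/setP => y; rewrite inE adjE.
rewrite /torus_nbrs -!setUA !cardsU1 cards1 !inE /torus_step !torus_site_shift_eq; lia.
Qed.

Lemma modn_add_mul A B t : A = B + t * L -> A = B %[mod L].
Proof. by move->; rewrite addnC modnMDl. Qed.

Ltac mod_congr := rewrite -?addnA ?modnDml ?modnDmr ?modn_mod;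
  first [ apply: (@modn_add_mul _ _ 0); lia
        | apply: (@modn_add_mul _ _ 1); lia | apply: (@modn_add_mul _ _ 2); lia
        | apply: esym; apply: (@modn_add_mul _ _ 1); lia
        | apply: esym; apply: (@modn_add_mul _ _ 2); lia ].

Lemma modn_lt_double n : n < L.*2 -> n %% L = if n < L then n else n - L.
Proof.
move=> n2L; case: ifPn => [/modn_small//|]; rewrite -leqNgt => Ln.
by rewrite -{1}(subnK Ln) modnDr modn_small //; lia.
Qed.

Lemma eq_modn_lt_double X Y : X = Y %[mod L] -> X < L.*2 -> Y < L.*2 ->
  X = Y \/ X = Y + L \/ Y = X + L.
Proof. by move=> + XL YL; rewrite !modn_lt_double //; do 2 case: ltnP => ?; lia. Qed.

Variable h : nat.
Hypothesis L_double : L = h.*2.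

Definition parity (x : site L) := odd (x.1 + x.2).

Lemma parity_torus_site a b : parity (torus_site a b) = odd (a + b).
Proof. by rewrite /parity /= oddD !odd_mod ?L_double ?odd_double // -oddD. Qed.

Lemma parity_adj x y : adj x y -> parity y = ~~ parity x.
Proof.
rewrite adjE !inE -!orbA /torus_step => /or4P[] /eqP->.
all: by rewrite parity_torus_site /parity; lia.
Qed.

Lemma independent_parity (S : {set site L}) p :
  {in S, forall x, parity x = p} -> independent (@adj L) S.
Proof. by move=> pS x y xS yS; apply/negP => /parity_adj; rewrite !pS //; case: (p). Qed.

Definition rhombus_site (e : site L) (k j : nat) : site L :=
  torus_site (e.1 + k + j) (e.2 + k + (L - j)).

Lemma rhombus_coreE a b e :
  rhombus_core a b e = [set rhombus_site e p.1 p.2 | p : 'I_a * 'I_b].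
Proof.
apply/setP => x; rewrite inE; apply/existsP/imsetP.
  case=> k /existsP[j xE]; exists (k, j) => //; exact/eqP.
by case=> [[k j] _ ->]; exists k; apply/existsP; exists j; rewrite -eq_torus_site.
Qed.

Lemma mem_rhombus_site a b e k j :
  k < a -> j < b -> rhombus_site e k j \in rhombus_core a b e.
Proof.
by move=> ka jb; rewrite rhombus_coreE; apply/imsetP; exists (Ordinal ka, Ordinal jb).
Qed.

Lemma parity_rhombus_site e k j : j <= L -> parity (rhombus_site e k j) = parity e.
Proof. by move=> jL; rewrite parity_torus_site /parity; lia. Qed.

Lemma parity_rhombus_core a b e :
  b <= L.+1 -> {in rhombus_core a b e, forall x, parity x = parity e}.
Proof.
move=> bL x; rewrite rhombus_coreE => /imsetP[[k j] _ ->].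
by apply: parity_rhombus_site; rewrite -ltnS (leq_trans (ltn_ord j)).
Qed.

Lemma rhombus_coreSl b (e : site L) : rhombus_core L.+1 b e = rhombus_core L b e.
Proof.
rewrite !rhombus_coreE; apply/setP => x; apply/imsetP/imsetP => -[[k j] _ ->]; last first.
  by exists (widen_ord (leqnSn L) k, j).
case: (ltnP k L) => [kL | Lk]; first by exists (Ordinal kL, j).
exists (Ordinal L_gt0, j) => //=; have -> : (k : nat) = L by have := ltn_ord k; lia.
by apply: torus_site_congr; mod_congr.
Qed.

Lemma rhombus_coreSr a (e : site L) : rhombus_core a L.+1 e = rhombus_core a L e.
Proof.
rewrite !rhombus_coreE; apply/setP => x; apply/imsetP/imsetP => -[[k j] _ ->]; last first.
  by exists (k, widen_ord (leqnSn L) j).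
case: (ltnP j L) => [jL | Lj]; first by exists (k, Ordinal jL).
exists (k, Ordinal L_gt0) => //=; have -> : (j : nat) = L by have := ltn_ord j; lia.
by apply: torus_site_congr; mod_congr.
Qed.

Lemma rhombus_site_half e k j :
  j < L -> rhombus_site e (k + h) j = rhombus_site e k ((j + h) %% L).
Proof.
move=> jL; rewrite [(j + h) %% L]modn_lt_double; last by lia.
by case: ltnP => c; apply: torus_site_congr; mod_congr.
Qed.

Lemma rhombus_site_fiber e k j k' j' : k < L -> j < L -> k' < L -> j' < L ->
  rhombus_site e k j = rhombus_site e k' j' ->
  k = k' /\ j = j' \/ k = k' + h /\ j' = (j + h) %% L \/ k' = k + h /\ j = (j' + h) %% L.
Proof.
move=> kL jL k'L j'L /eqP; rewrite eq_torus_site /= -!/(_ == _ %[mod L]) -!addnA !eqn_modDl.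
move=> /andP[/eqP/eq_modn_lt_double E1 /eqP/eq_modn_lt_double E2].
have {}E1 := E1 ltac:(lia) ltac:(lia); have {}E2 := E2 ltac:(lia) ltac:(lia).
rewrite !(@modn_lt_double (_ + h)); try lia.
by do 2 case: ltnP => ?; lia.
Qed.

(* [(k, j)] with [k >= h] whose partner [(k - h, (j + h) %% L)], which has the
   same image by [rhombus_site_half], also lies in the box. *)
Definition redundant a b (p : 'I_a * 'I_b) := (h <= p.1) && ((p.2 + h) %% L < b).

Lemma card_redundant a b :
  b <= L -> #|[set p : 'I_a * 'I_b | redundant p]| = (a - h) * (2 * (b - h)).
Proof.
move=> bL; rewrite (_ : [set p | redundant p] =
    setX [set k : 'I_a | h <= k < a] [set j : 'I_b | (j + h) %% L < b]); last first.
  by apply/setP => -[k j]; rewrite !inE /redundant /= (ltn_ord k) andbT.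
rewrite cardsX card_ord_range minnn; congr (_ * _).
rewrite (_ : #|_| = #|[set j : 'I_b | 0 <= j < b - h]| + #|[set j : 'I_b | h <= j < L]|).
  by rewrite !card_ord_range; lia.
rewrite !card_set_sum -big_split; apply: eq_bigr => j _ /=.
have jb := ltn_ord j; rewrite modn_lt_double; last by lia.
by case: (ltnP (j + h) L); lia.
Qed.

Lemma rhombus_core_nonredundant a b e : a <= L -> b <= L ->
  rhombus_core a b e =
  [set rhombus_site e p.1 p.2 | p : 'I_a * 'I_b in ~: [set p | redundant p]].
Proof.
move=> aL bL; rewrite rhombus_coreE; apply/setP => x.
apply/imsetP/imsetP => -[[k j] pR ->]; last by exists (k, j).
case rkj: (redundant (k, j)); last by exists (k, j); rewrite // !inE rkj.
move: rkj => /andP[/= hk jb]; have ka : k - h < a by have := ltn_ord k; lia.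
exists (Ordinal ka, Ordinal jb).
  by rewrite !inE /redundant /= negb_and -ltnNge; have := ltn_ord k; lia.
by rewrite /= -rhombus_site_half ?subnK // (leq_trans (ltn_ord j)).
Qed.

Lemma rhombus_site_nonredundant_inj a b e : a <= L -> b <= L ->
  {in ~: [set p : 'I_a * 'I_b | redundant p] &,
      injective (fun p : 'I_a * 'I_b => rhombus_site e p.1 p.2)}.
Proof.
move=> aL bL [k j] [k' j']; rewrite !inE /redundant /= => r r' E.
have := leq_trans (ltn_ord k) aL; have := leq_trans (ltn_ord j) bL.
have := leq_trans (ltn_ord k') aL; have := leq_trans (ltn_ord j') bL.
move=> j'L k'L jL kL.
case: (rhombus_site_fiber kL jL k'L j'L E) => [[/val_inj-> /val_inj->] //|].
case=> -[Ek Ej]; first by move: r; rewrite Ek -Ej leq_addl ltn_ord.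
by move: r'; rewrite Ek -Ej leq_addl ltn_ord.
Qed.

Lemma card_rhombus_core a b (e : site L) : a <= L -> b <= L ->
  #|rhombus_core a b e| + 2 * ((a - h) * (b - h)) = a * b.
Proof.
move=> aL bL; rewrite rhombus_core_nonredundant // card_in_imset; last first.
  exact: rhombus_site_nonredundant_inj.
have := cardsC [set p : 'I_a * 'I_b | redundant p].
by rewrite card_prod !card_ord card_redundant // => <-; rewrite mulnCA addnC.
Qed.

Lemma card_rhombus_core_succ a b (e : site L) : a <= L -> b <= L ->
  #|rhombus_core a.+1 b.+1 e| + 2 * ((minn a.+1 L - h) * (minn b.+1 L - h)) =
  minn a.+1 L * minn b.+1 L.
Proof.
move=> aL bL.
have -> : rhombus_core a.+1 b.+1 e = rhombus_core (minn a.+1 L) b.+1 e.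
  case: (ltnP a L) => [/minn_idPl-> // | La]; have -> : a = L by lia.
  by rewrite (minn_idPr (leqnSn L)) rhombus_coreSl.
have -> : rhombus_core (minn a.+1 L) b.+1 e = rhombus_core (minn a.+1 L) (minn b.+1 L) e.
  case: (ltnP b L) => [/minn_idPl-> // | Lb]; have -> : b = L by lia.
  by rewrite (minn_idPr (leqnSn L)) rhombus_coreSr.
exact: card_rhombus_core (geq_minr _ _) (geq_minr _ _).
Qed.

Lemma torus_nbrs_rhombus_site e k j : j < L ->
  let e' := torus_step e (L - 1) 0 in
  torus_nbrs (rhombus_site e k j) = [set rhombus_site e' k.+1 j.+1; rhombus_site e' k j;
                                       rhombus_site e' k.+1 j; rhombus_site e' k j.+1].
Proof.
by move=> jL e'; rewrite /torus_nbrs /torus_step; congr [set _; _; _; _];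
  apply: torus_site_congr; mod_congr.
Qed.

Lemma bdry_rhombus_core l1 l2 e : 0 < l1 -> 0 < l2 -> l2 <= L ->
  bdry (rhombus_core l1 l2 e) = rhombus_core l1.+1 l2.+1 (torus_step e (L - 1) 0).
Proof.
move=> l1_gt0 l2_gt0 l2L; set e' := torus_step e (L - 1) 0.
apply/setP => y; rewrite inE; apply/andP/idP.
  case=> _ /existsP[x /andP[]]; rewrite rhombus_coreE => /imsetP[[k j] _ ->] /=.
  have := ltn_ord k; have := ltn_ord j => jl kl.
  rewrite adjE torus_nbrs_rhombus_site; last lia.
  by rewrite !in_setU !in_set1 -!orbA => /or4P[] /eqP->; apply: mem_rhombus_site; lia.
rewrite rhombus_coreE => /imsetP[[k j] _ ->] /=.
have kl := ltn_ord k; have jl := ltn_ord j.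
split.
  have pe' : parity (rhombus_site e' k j) = ~~ parity e.
    by rewrite parity_rhombus_site ?parity_torus_site /parity; lia.
  by apply/negP => /(parity_rhombus_core (leqW l2L)); rewrite pe'; case: (parity e).
apply/existsP; exists (rhombus_site e (k - (l1 <= k)) (j - (l2 <= j))).
rewrite mem_rhombus_site /=; [ | lia | lia].
rewrite adjE torus_nbrs_rhombus_site; last lia.
rewrite !in_setU !in_set1 -!orbA.
by case: (leqP l1 k) => ?; case: (leqP l2 j) => ? /=;
  rewrite ?subn0 ?subnSK ?subn0 ?eqxx ?orbT //; lia.
Qed.

Lemma rhombus_site00 e : rhombus_site e 0 0 = e.
Proof.
apply/esym/eqP; rewrite /rhombus_site eq_torus_site !addn0 subn0 modnDr.
by rewrite !modn_small ?eqxx.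
Qed.

Lemma rhombus_degenerate l1 l2 (e : site L) :
  l1 * l2 = 0 -> rhombus l1 l2 e = rhombus_core l1.+1 l2.+1 e.
Proof.
rewrite /rhombus; case: l1 l2 => [|l1] [|l2] //= _; apply/setP => x; rewrite !inE.
- by rewrite !exists_ord1 /= -[_ && _]/(x == rhombus_site e 0 0) rhombus_site00.
- by rewrite [RHS]exists_ord1 /= !addn0.
apply: eq_existsb => k; rewrite [RHS]exists_ord1 /=.
rewrite -[_ && _]/(x == torus_site (e.1 + k) (e.2 + k)).
by rewrite (@torus_site_congr _ _ (e.1 + k + 0) (e.2 + k + (L - 0))) //; mod_congr.
Qed.

Lemma perim_rhombus l1 l2 (e : site L) : 2 < L -> l1 <= L -> l2 <= L ->
  perim (rhombus l1 l2 e) + 4 * #|rhombus_core l1 l2 e| = 4 * #|rhombus_core l1.+1 l2.+1 e|.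
Proof.
move=> L_gt2 l1L l2L; rewrite perimE.
have deg x := card_adj x L_gt2.
have indep a b e0 : b <= L.+1 -> independent (@adj L) (rhombus_core a b e0).
  by move=> bL; apply: independent_parity (parity_rhombus_core bL).
case: (posnP (l1 * l2)) => [l0 | ].
  move: (card_rhombus_core e l1L l2L); rewrite l0 => /eqP; rewrite addn_eq0 => /andP[/eqP-> _].
  by rewrite muln0 addn0 rhombus_degenerate // (edge_perim_independent deg) //; apply: indep.
rewrite muln_gt0 => /andP[l1_gt0 l2_gt0].
rewrite /rhombus l1_gt0 l2_gt0 /= bdryE (edge_perim_closure adj_sym deg); first last.
- by rewrite -bdryE bdry_rhombus_core //; apply: indep.
- by apply: indep; rewrite ltnW.
rewrite -bdryE bdry_rhombus_core //; congr (4 * _); apply/eqP.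
rewrite -(eqn_add2r (2 * ((minn l1.+1 L - h) * (minn l2.+1 L - h)))).
by rewrite !card_rhombus_core_succ.
Qed.

End Torus.

Variant half_spec (h l : nat) : nat -> nat -> nat -> Prop :=
  | HalfLow of l < h : half_spec h l l.+1 0 0
  | HalfHigh u of l = h + u & u < h : half_spec h l (h + u).+1 u.+1 u
  | HalfFull of l = h.*2 : half_spec h l h.*2 h h.

Lemma halfP h l : l <= h.*2 ->
  half_spec h l (minn l.+1 h.*2) (minn l.+1 h.*2 - h) (l - h).
Proof.
move=> lh; case: (ltnP l h) => [lo | hi].
  have [-> -> ->] : [/\ minn l.+1 h.*2 = l.+1, l.+1 - h = 0 & l - h = 0] by split; lia.
  exact: HalfLow.
case: (ltnP l h.*2) => [mid | full].
  have [u -> uh] : exists2 u, l = h + u & u < h by exists (l - h); lia.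
  have [-> -> ->] : [/\ minn (h + u).+1 h.*2 = (h + u).+1,
                        (h + u).+1 - h = u.+1 & h + u - h = u] by split; lia.
  exact: HalfHigh.
have -> : l = h.*2 by lia.
have [-> ->] : minn h.*2.+1 h.*2 = h.*2 /\ h.*2 - h = h by split; lia.
exact: HalfFull.
Qed.

Lemma rhombus_perim_arith L h l1 l2 P N1 N0 : L = h.*2 -> l1 <= L -> l2 <= L ->
  N1 + 2 * ((minn l1.+1 L - h) * (minn l2.+1 L - h)) = minn l1.+1 L * minn l2.+1 L ->
  N0 + 2 * ((l1 - h) * (l2 - h)) = l1 * l2 ->
  P + 4 * N0 = 4 * N1 ->
  P = 4 * (if maxn l1 l2 < L then
             (if minn l1 l2 < h then l1 + l2 + 1 else 2 * L - (l1 + l2 + 1))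
           else (if minn l1 l2 < h then L else 0)).
Proof.
by move=> -> /halfP[c1|u1 -> c1|->] /halfP[c2|u2 -> c2|->] *; repeat case: ifP; lia.
Qed.

Theorem proposition3p3 (L : nat) (hL6 : 6 <= L) (hLeven : ~~ odd L)
  (l1 l2 : nat) (h1 : l1 <= L) (h2 : l2 <= L) (eta : site L)
  (heta : if (0 < l1) && (0 < l2) then is_odd_site eta else is_even_site eta) :
  perim (rhombus l1 l2 eta) =
  4 * (if maxn l1 l2 < L then
         (if minn l1 l2 < L %/ 2 then l1 + l2 + 1 else 2 * L - (l1 + l2 + 1))
       else
         (if minn l1 l2 < L %/ 2 then L else 0)).
Proof.
have L_gt0 : 0 < L by apply: leq_trans hL6.
have [h Lh] : exists h, L = h.*2.
  by exists L./2; rewrite -[LHS](odd_double_half L) (negbTE hLeven).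
have -> : L %/ 2 = h by rewrite Lh divn2 doubleK.
apply: (rhombus_perim_arith Lh h1 h2 (card_rhombus_core_succ L_gt0 Lh eta h1 h2)
          (card_rhombus_core L_gt0 Lh eta h1 h2)).
by apply: (perim_rhombus L_gt0 Lh); lia.
Qed.
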